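(* Consider the optimization problem $\mathcal{P}_3$ with Lagrangian $h$ and multipliers $\theta_k,\Gamma_{k,l},\eta_{k,i\to l},\beta$ described in the context. The receivers, the Lagrange multiplier $\beta$ and the precoders given by $$V_{k,i\to l}=\alpha_{k,l}\,\mathbf{p}_k^H\mathbf{h}_{k,i}^H\,T_{k,i\to l}^{-1},$$ $$\beta=\frac{1}{E_{tx}}\sum_{k=1}^K\sum_{l=1}^L\sum_{i=l}^L\eta_{k,i\to l}\,b_{k,i\to l}\,|V_{k,i\to l}|^2,$$ $$\mathbf{p}_k=\Big[\beta\mathbf{I}+\sum_{l=1}^L\sum_{i=l}^L\sum_{j=l}^L\alpha_{k,j}\eta_{k,i\to l}b_{k,i\to l}\mathbf{h}_{k,i}^H|V_{k,i\to l}|^2\mathbf{h}_{k,i}+\sum_{t=1,t\ne k}^{K}\sum_{l=1}^L\sum_{i=l}^L\eta_{t,i\to l}b_{t,i\to l}\mathbf{h}_{t,i}^H|V_{t,i\to l}|^2\mathbf{h}_{t,i}\Big]^{-1}\Big[\sum_{l=1}^L\sum_{i=l}^L\eta_{k,i\to l}b_{k,i\to l}\alpha_{k,l}\mathbf{h}_{k,i}^H V_{k,i\to l}^{*}\Big]$$ satisfy the KKT conditions of $\mathcal{P}_3$.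
   Context: A base station with $M$ antennas serves $K$ clusters of $L$ single-antenna users each; user $i$ of cluster $k$ has channel row vector $\mathbf{h}_{k,i}\in\mathbb{C}^{1\times M}$. Power fractions satisfy $\alpha_{k,l}>0$, $\sum_{l=1}^L\alpha_{k,l}=1$. The precoder is $\mathbf{P}=[\mathbf{p}_1,\dots,\mathbf{p}_K]\in\mathbb{C}^{M\times K}$ with total power budget $E_{tx}>0$. For $1\le l\le i\le L$ define $r_{k,i\to l}=\sum_{j=l+1}^{L}\alpha_{k,j}|\mathbf{h}_{k,i}\mathbf{p}_k|^2+\sum_{t\ne k}|\mathbf{h}_{k,i}\mathbf{p}_t|^2+1$ and $T_{k,i\to l}=\alpha_{k,l}|\mathbf{h}_{k,i}\mathbf{p}_k|^2+r_{k,i\to l}$. For scalar receivers $V_{k,i\to l}\in\mathbb{C}$ define the MSE $\varepsilon_{k,i\to l}=|V_{k,i\to l}|^2T_{k,i\to l}+\alpha_{k,l}-2\,\mathrm{Re}\{\alpha_{k,l}V_{k,i\to l}\mathbf{h}_{k,i}\mathbf{p}_k\}$ and, for weights $b_{k,i\to l}>0$, the augmented weighted MSE $\xi_{k,i\to l}=b_{k,i\to l}\varepsilon_{k,i\to l}-\log(\alpha_{k,l}b_{k,i\to l})$. Problem $\mathcal{P}_3$: minimize $\bar c$ over $\mathbf{P}$, $\{\xi_{k,l}\}$, $\bar c$, $\{V_{k,i\to l}\}$, $\{b_{k,i\to l}\}$ subject to $\sum_{l=1}^L\xi_{k,l}\le\bar c$ for all $k$; $\xi_{k,i\to l}\le\xi_{k,l}$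 for all $k$ and $l\le i\le L$; $\xi_{k,l}\le\xi^{th}_{k,l}$ for all $k,l$ (given thresholds); $\mathrm{Tr}(\mathbf{P}\mathbf{P}^H)\le E_{tx}$. Its Lagrangian is $h=\bar c-\sum_k\theta_k\bar c+\sum_{k,l}\theta_k\xi_{k,l}+\sum_{k,l}\Gamma_{k,l}(\xi_{k,l}-\xi^{th}_{k,l})+\beta(\mathrm{Tr}(\mathbf{P}\mathbf{P}^H)-E_{tx})+\sum_k\sum_{l=1}^L\sum_{i=l}^L\eta_{k,i\to l}(\xi_{k,i\to l}-\xi_{k,l})$, with nonnegative multipliers $\theta_k,\Gamma_{k,l},\eta_{k,i\to l},\beta$. KKT conditions comprise stationarity of $h$ (complex derivatives with respect to conjugated variables), primal feasibility, dual nonnegativity and complementary slackness. *)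

From HB Require Import structures.
From mathcomp Require Import all_boot all_order all_algebra.
From mathcomp Require Import complex.
From mathcomp Require Import all_classical all_reals all_analysis.
Set Implicit Arguments. Unset Strict Implicit. Unset Printing Implicit Defensive.
Import Order.TTheory GRing.Theory Num.Theory.
Local Open Scope ring_scope.

Section Defs.
Variable R : realType.
Local Notation C := R[i].
Local Notation toC := (fun x : R => Complex x 0).
Local Notation iC := (Complex (0 : R) 1).

Definition sqn (z : C) : R := complex.Re z ^+ 2 + complex.Im z ^+ 2.

Definition herm m n (A : 'M[C]_(m, n)) : 'M[C]_(n, m) := (map_mx (@conjc R) A)^T.

Variables (M K L : nat).
(* hch k i = h_{k,i} (row vector 1 x M), alpha k l = alpha_{k,l} *)
Variables (hch : 'I_K -> 'I_L -> 'rV[C]_M) (alpha : 'I_K -> 'I_L -> R).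

Definition hp (P : 'M[C]_(M, K)) (k : 'I_K) (i : 'I_L) (t : 'I_K) : C :=
  (hch k i *m col t P) 0 0.

Definition rr (P : 'M[C]_(M, K)) (k : 'I_K) (i l : 'I_L) : R :=
  \sum_(j < L | (l < j)%N) alpha k j * sqn (hp P k i k)
  + \sum_(t < K | t != k) sqn (hp P k i t) + 1.

Definition TT (P : 'M[C]_(M, K)) (k : 'I_K) (i l : 'I_L) : R :=
  alpha k l * sqn (hp P k i k) + rr P k i l.

Definition mse (P : 'M[C]_(M, K)) (v : C) (k : 'I_K) (i l : 'I_L) : R :=
  sqn v * TT P k i l + alpha k l
  - 2 * complex.Re (toC (alpha k l) * v * hp P k i k).

Definition awmse (P : 'M[C]_(M, K)) (v : C) (bw : R) (k : 'I_K) (i l : 'I_L) : R :=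
  bw * mse P v k i l - ln (alpha k l * bw).

(* Tr(P P^H), which is real *)
Definition trPPH (P : 'M[C]_(M, K)) : R := complex.Re (\tr (P *m herm P)).

(* The Lagrangian h of problem P3.  V k i l = V_{k,i->l}, b k i l = b_{k,i->l},
   eta k i l = eta_{k,i->l}; only triples with l <= i enter. *)
Definition lagr (Etx : R) (xith : 'I_K -> 'I_L -> R)
  (P : 'M[C]_(M, K)) (xi : 'I_K -> 'I_L -> R) (cbar : R)
  (V : 'I_K -> 'I_L -> 'I_L -> C) (b : 'I_K -> 'I_L -> 'I_L -> R)
  (theta : 'I_K -> R) (Gam : 'I_K -> 'I_L -> R)
  (eta : 'I_K -> 'I_L -> 'I_L -> R) (beta : R) : R :=
  cbar - \sum_(k < K) theta k * cbar
  + \sum_(k < K) \sum_(l < L) theta k * xi k l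
  + \sum_(k < K) \sum_(l < L) Gam k l * (xi k l - xith k l)
  + beta * (trPPH P - Etx)
  + \sum_(k < K) \sum_(l < L) \sum_(i < L | (l <= i)%N)
      eta k i l * (awmse P (V k i l) (b k i l) k i l - xi k l).

End Defs.

(* Wirtinger calculus for a real-valued function f of one complex variable:
   partial derivatives w.r.t. the real and imaginary parts at z, and the
   conjugate Wirtinger derivative  df/dz^* = (df/dx + i df/dy) / 2. *)
Section Wirtinger.
Variable R : realType.
Local Notation C := R[i].

Definition dRe (f : C -> R) (z : C) : R :=
  derive1 (fun t : R => f (z + Complex t 0)) 0.
Definition dIm (f : C -> R) (z : C) : R :=
  derive1 (fun t : R => f (z + Complex 0 t)) 0.

Definition dconj (f : C -> R) (z : C) : C :=
  (Complex (dRe f z) 0 + Complex 0 1 * Complex (dIm f z) 0) / 2%:R.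

Definition wstationary (f : C -> R) (z : C) : Prop :=
  derivable (fun t : R => f (z + Complex t 0)) 0 1 /\
  derivable (fun t : R => f (z + Complex 0 t)) 0 1 /\
  dconj f z = 0.

End Wirtinger.

Definition updV (T : Type) (K L : nat) (V : 'I_K -> 'I_L -> 'I_L -> T)
  (k : 'I_K) (i l : 'I_L) (v : T) : 'I_K -> 'I_L -> 'I_L -> T :=
  fun k' i' l' => if [&& k' == k, i' == i & l' == l] then v else V k' i' l'.

Definition updM (T : Type) (m n : nat) (A : 'M[T]_(m, n)) (a : 'I_m) (c : 'I_n)
  (z : T) : 'M[T]_(m, n) :=
  \matrix_(x, y) if (x == a) && (y == c) then z else A x y.

(* Along every real line t |-> z + t d through a candidate point z, the
   Lagrangian h is a quadratic polynomial in t, so its conjugate Wirtinger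
   derivative vanishes at z as soon as h is even about z:
   h (z + d) = h (z - d) for all d.
   For a receiver this is completion of the square: the MSE
   |v|^2 T - 2 Re (alpha v h_{k,i} p_k) + alpha is even about
   alpha (h_{k,i} p_k)^* / T.
   For the precoders, polarization gives
   h (P + D) - h (P - D) = 4 sum_k Re <d_k, A_k p_k - r_k>, where A_k and r_k
   are the bracketed matrix and vector of the precoder formula, so h is even
   about P when p_k = A_k^-1 r_k.
   With D = P, evenness and the optimal receivers turn the same identity into
   beta Tr (P P^H) = sum eta b |V|^2, which is beta E_tx by the formula for
   beta: complementary slackness.  Feasibility follows: either
   Tr (P P^H) = E_tx, or beta = 0, and then every eta b |V|^2 vanishes, so
   r_k = 0 and P = 0. *)

From Pilot Require Import Defs.
From HB Require Import structures.
From mathcomp Require Import all_boot all_order all_algebra.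
From mathcomp Require Import complex.
From mathcomp Require Import all_classical all_reals all_analysis.
From mathcomp Require Import ring lra.
Import Order.TTheory GRing.Theory Num.Theory.
Local Open Scope ring_scope.
Set Implicit Arguments. Unset Strict Implicit. Unset Printing Implicit Defensive.

Section RealDot.
Variable R : realType.
Local Notation C := R[i].

Definition rdot (a c : C) : R := complex.Re (conjc a * c).

Lemma rdotE (a c : C) :
  rdot a c = complex.Re a * complex.Re c + complex.Im a * complex.Im c.
Proof. by case: a c => a1 a2 [c1 c2]; rewrite /rdot /=; ring. Qed.

Lemma rdot_is_zmod_morphism a : zmod_morphism (rdot a).
Proof. by move=> x y; rewrite /rdot mulrBr raddfB. Qed.

HB.instance Definition _ a :=
  GRing.isZmodMorphism.Build C R (rdot a) (rdot_is_zmod_morphism a).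

Lemma rdotC (a c : C) : rdot a c = rdot c a.
Proof. by rewrite !rdotE; ring. Qed.

Lemma rdot_suml I (r : seq I) (P : pred I) (F : I -> C) (c : C) :
  rdot (\sum_(i <- r | P i) F i) c = \sum_(i <- r | P i) rdot (F i) c.
Proof. by rewrite rdotC raddf_sum; apply: eq_bigr => i _; rewrite rdotC. Qed.

Lemma rdotZr (a : C) (r : R) (z : C) : rdot a (Complex r 0 * z) = r * rdot a z.
Proof. by rewrite !rdotE; case: a z => ? ? [? ?] /=; ring. Qed.

Lemma rdot_conjMr (a h z : C) : rdot a (conjc h * z) = rdot (h * a) z.
Proof. by rewrite !rdotE; case: a h z => ? ? [? ?] [? ?] /=; ring. Qed.

Lemma rdot_conjr (a v : C) : rdot a (conjc v) = complex.Re (v * a).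
Proof. by rewrite rdotE; case: a v => ? ? [? ?] /=; ring. Qed.

Lemma rdotii (a : C) : rdot a a = sqn a.
Proof. by rewrite rdotE /sqn !expr2. Qed.

Lemma Re_mulcJ (z : C) : complex.Re (z * conjc z) = sqn z.
Proof. by rewrite mulrC -rdotii. Qed.

Lemma sqn_polarization (a c : C) : sqn (a + c) = sqn (a - c) + 4 * rdot c a.
Proof. by rewrite rdotE; case: a c => ? ? [? ?]; rewrite /sqn /=; ring. Qed.

Lemma sqn_ge0 (a : C) : 0 <= sqn a.
Proof. by rewrite /sqn addr_ge0 // sqr_ge0. Qed.

Lemma sqn_eq0 (z : C) : sqn z = 0 -> z = 0.
Proof.
case: z => a b; rewrite /sqn /= => ab0.
have a0 : a = 0 by nra.
have b0 : b = 0 by nra.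
by rewrite a0 b0.
Qed.

End RealDot.

Section Quadratic.
Variable R : realType.
Local Notation C := R[i].

Definition quadratic (g : R -> R) :=
  exists a b c : R, forall t, g t = a + b * t + c * (t * t).

Lemma quadratic_derive0 (a b c : R) :
  derivable (fun t : R => a + b * t + c * (t * t)) 0 1 /\
  derive1 (fun t : R => a + b * t + c * (t * t)) 0 = b.
Proof.
have id' := @is_derive_id R R^o (0 : R) (1 : R).
have := is_deriveD (is_deriveD (@is_derive_cst R R^o R^o a 0 1) (is_deriveZ b id'))
  (is_deriveZ c (is_deriveM id' id')).
set F := (_ + _ + _) => DF.
have -> : (fun t : R => a + b * t + c * (t * t)) = F by [].
split; first exact: ex_derive.
rewrite derive1E derive_val /= !scale0r addr0 scaler0 addr0 add0r.
by rewrite /GRing.scale /= mulr1.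
Qed.

Lemma quadratic_even_derive0 g :
  quadratic g -> g 1 = g (-1) -> derivable g 0 1 /\ derive1 g 0 = 0.
Proof.
move=> [a [b [c gE]]] g_even.
have -> : g = (fun t : R => a + b * t + c * (t * t)) by apply/funext.
have [? ->] := quadratic_derive0 a b c; split=> //.
by move: g_even; rewrite !gE; lra.
Qed.

Lemma quadratic_cst r : quadratic (fun _ => r).
Proof. by exists r, 0, 0 => t; rewrite !mul0r !addr0. Qed.

Lemma quadraticD f g : quadratic f -> quadratic g -> quadratic (fun t => f t + g t).
Proof.
move=> [a [b [c fE]]] [a' [b' [c' gE]]].
by exists (a + a'), (b + b'), (c + c') => t; rewrite fE gE; ring.
Qed.

Lemma quadraticB f g : quadratic f -> quadratic g -> quadratic (fun t => f t - g t).
Proof.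
move=> [a [b [c fE]]] [a' [b' [c' gE]]].
by exists (a - a'), (b - b'), (c - c') => t; rewrite fE gE; ring.
Qed.

Lemma quadraticMl r f : quadratic f -> quadratic (fun t => r * f t).
Proof. by move=> [a [b [c fE]]]; exists (r * a), (r * b), (r * c) => t; rewrite fE; ring. Qed.

Lemma quadraticMr r f : quadratic f -> quadratic (fun t => f t * r).
Proof. by move=> [a [b [c fE]]]; exists (r * a), (r * b), (r * c) => t; rewrite fE; ring. Qed.

Lemma quadratic_sum I (s : seq I) (P : pred I) (F : I -> R -> R) :
  (forall i, quadratic (F i)) -> quadratic (fun t => \sum_(i <- s | P i) F i t).
Proof.
move=> Fq; elim: s => [|x s IHs].
  by under eq_fun do rewrite big_nil; apply: quadratic_cst.
under eq_fun do rewrite big_cons.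
by case: (P x) => //; apply: quadraticD.
Qed.

Lemma quadratic_sqn (z w : C) : quadratic (fun t => sqn (z + Complex t 0 * w)).
Proof.
case: z w => a b [c d]; rewrite /sqn /=.
by exists (a ^+ 2 + b ^+ 2), (2 * (a * c + b * d)), (c ^+ 2 + d ^+ 2) => t; ring.
Qed.

Lemma quadratic_Re (a x y : C) :
  quadratic (fun t => complex.Re (a * (x + Complex t 0 * y))).
Proof.
case: a x y => a1 a2 [x1 x2] [y1 y2] /=.
by exists (a1 * x1 - a2 * x2), (a1 * y1 - a2 * y2), 0 => t; ring.
Qed.

(* Only the directions 1 and 'i are used: an even quadratic has derivative 0 at 0. *)
Lemma wstationary_even (f : C -> R) (z : C) :
  (forall d, quadratic (fun t => f (z + Complex t 0 * d))) ->
  (forall d, f (z + d) = f (z - d)) -> wstationary f z.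
Proof.
move=> f_quad f_even.
have line (d : C) : derivable (fun t : R => f (z + Complex t 0 * d)) 0 1 /\
              derive1 (fun t : R => f (z + Complex t 0 * d)) 0 = 0.
  apply: quadratic_even_derive0 => //.
  have -> : Complex 1 0 * d = d by case: d => ? ? /=; congr Complex; ring.
  have -> : Complex (-1) 0 * d = - d by case: d => ? ? /=; congr Complex; ring.
  exact: f_even.
have eRe : (fun t => f (z + Complex t 0)) = (fun t => f (z + Complex t 0 * 1)).
  by apply/funext => t; rewrite mulr1.
have eIm : (fun t => f (z + Complex 0 t)) = (fun t => f (z + Complex t 0 * Complex 0 1)).
  by apply/funext => t; congr (f (z + _)) => /=; congr Complex; ring.
have [der1 der1_0] := line 1; have [deri deri_0] := line (Complex 0 1).
rewrite /wstationary /dconj /dRe /dIm eRe eIm der1_0 deri_0; do 2!split=> //.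
by rewrite mulr0 addr0 mul0r.
Qed.

End Quadratic.

Section BigSums.
Variables (V : nmodType) (n : nat).

Lemma exchange_big_neq (F : 'I_n -> 'I_n -> V) :
  \sum_(k < n) \sum_(t < n | t != k) F k t = \sum_(k < n) \sum_(t < n | t != k) F t k.
Proof.
under eq_bigr do rewrite big_mkcond.
rewrite exchange_big; apply: eq_bigr => t _; rewrite [RHS]big_mkcond /=.
by apply: eq_bigr => k _; rewrite eq_sym.
Qed.

Lemma big_ord_geq_split (l : 'I_n) (f : 'I_n -> V) :
  \sum_(j < n | (l <= j)%N) f j = f l + \sum_(j < n | (l < j)%N) f j.
Proof.
rewrite (bigD1 l) //=; congr (_ + _); apply: eq_bigl => j.
by rewrite ltn_neqAle andbC eq_sym.
Qed.

End BigSums.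

Section Lagrangian.
Variables (R : realType) (M K L : nat).
Variables (hch : 'I_K -> 'I_L -> 'rV[R[i]]_M) (alpha : 'I_K -> 'I_L -> R).
Local Notation C := R[i].
Local Notation hp := (hp hch).
Local Notation TT := (TT hch alpha).
Local Notation mse := (mse hch alpha).
Local Notation lagr := (lagr hch alpha).

Lemma hpE (P : 'M[C]_(M, K)) k i t : hp P k i t = \sum_(m < M) hch k i 0 m * P m t.
Proof. by rewrite /Defs.hp !mxE; apply: eq_bigr => m _; rewrite !mxE. Qed.

Lemma hpD (P Q : 'M[C]_(M, K)) : hp (P + Q) = fun k i t => hp P k i t + hp Q k i t.
Proof.
apply/funext => k; apply/funext => i; apply/funext => t.
by rewrite !hpE -big_split; apply: eq_bigr => m _; rewrite mxE mulrDr.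
Qed.

Lemma hpB (P Q : 'M[C]_(M, K)) : hp (P - Q) = fun k i t => hp P k i t - hp Q k i t.
Proof.
apply/funext => k; apply/funext => i; apply/funext => t.
by rewrite !hpE -sumrB; apply: eq_bigr => m _; rewrite !mxE mulrBr.
Qed.

Lemma hpZ (c : C) (P : 'M[C]_(M, K)) : hp (c *: P) = fun k i t => c * hp P k i t.
Proof.
apply/funext => k; apply/funext => i; apply/funext => t.
by rewrite !hpE mulr_sumr; apply: eq_bigr => m _; rewrite mxE mulrCA.
Qed.

Lemma trPPH_E (X : 'M[C]_(M, K)) : trPPH X = \sum_(m < M) \sum_(k < K) sqn (X m k).
Proof.
rewrite /trPPH /mxtrace raddf_sum; apply: eq_bigr => m _.
rewrite mxE raddf_sum; apply: eq_bigr => k _.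
by rewrite /herm !mxE; apply: Re_mulcJ.
Qed.

Lemma TT_gt0 (alpha_gt0 : forall k l, 0 < alpha k l) P k i l : 0 < TT P k i l.
Proof.
have weighted_ge0 j : 0 <= alpha k j * sqn (hp P k i k).
  by rewrite mulr_ge0 ?sqn_ge0 // ltW.
have later_ge0 : 0 <= \sum_(j < L | (l < j)%N) alpha k j * sqn (hp P k i k).
  by apply: sumr_ge0 => j _; apply: weighted_ge0.
have others_ge0 : 0 <= \sum_(t < K | t != k) sqn (hp P k i t).
  by apply: sumr_ge0 => t _; apply: sqn_ge0.
have := weighted_ge0 l; rewrite /Defs.TT /Defs.rr; lra.
Qed.

Lemma quadratic_mse_P (P D : 'M[C]_(M, K)) v k i l :
  quadratic (fun t => mse (P + Complex t 0 *: D) v k i l).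
Proof.
rewrite /Defs.mse /Defs.TT /Defs.rr.
under eq_fun => t do rewrite hpD hpZ /=.
apply: quadraticB; last by apply: quadraticMl; apply: quadratic_Re.
apply: quadraticD; last exact: quadratic_cst.
apply: quadraticMl; apply: quadraticD; first by apply: quadraticMl; apply: quadratic_sqn.
apply: quadraticD; last exact: quadratic_cst.
apply: quadraticD; first by apply: quadratic_sum => j; apply: quadraticMl; apply: quadratic_sqn.
by apply: quadratic_sum => j; apply: quadratic_sqn.
Qed.

Lemma quadratic_mse_V (P : 'M[C]_(M, K)) (v w : C) k i l :
  quadratic (fun t => mse P (v + Complex t 0 * w) k i l).
Proof.
rewrite /Defs.mse; apply: quadraticB.
  apply: quadraticD; last exact: quadratic_cst.
  by apply: quadraticMr; apply: quadratic_sqn.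
apply: quadraticMl; under eq_fun => t do rewrite mulrAC.
exact: quadratic_Re.
Qed.

Lemma quadratic_trPPH (P D : 'M[C]_(M, K)) :
  quadratic (fun t => trPPH (P + Complex t 0 *: D)).
Proof.
under eq_fun => t do rewrite trPPH_E.
apply: quadratic_sum => m; apply: quadratic_sum => k.
under eq_fun => t do rewrite !mxE.
exact: quadratic_sqn.
Qed.

Lemma quadratic_lagr Etx xith (Pt : R -> 'M[C]_(M, K)) xi cbar
    (Vt : R -> 'I_K -> 'I_L -> 'I_L -> C) b theta Gam eta beta :
  quadratic (fun t => trPPH (Pt t)) ->
  (forall k i l, quadratic (fun t => mse (Pt t) (Vt t k i l) k i l)) ->
  quadratic (fun t => lagr Etx xith (Pt t) xi cbar (Vt t) b theta Gam eta beta).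
Proof.
move=> tr_quad mse_quad; rewrite /Defs.lagr.
apply: quadraticD; last first.
  apply: quadratic_sum => k; apply: quadratic_sum => l; apply: quadratic_sum => i.
  apply: quadraticMl; apply: quadraticB; last exact: quadratic_cst.
  by rewrite /awmse; apply: quadraticB; [apply: quadraticMl | apply: quadratic_cst].
apply: quadraticD; first exact: quadratic_cst.
by apply: quadraticMl; apply: quadraticB => //; apply: quadratic_cst.
Qed.

Implicit Types F G : 'I_K -> 'I_L -> 'I_L -> R.

Definition sum_kli (F : 'I_K -> 'I_L -> 'I_L -> R) : R :=
  \sum_(k < K) \sum_(l < L) \sum_(i < L | (l <= i)%N) F k i l.

Lemma eq_sum_kli F G :
  (forall (k : 'I_K) (i l : 'I_L), (l <= i)%N -> F k i l = G k i l) -> sum_kli F = sum_kli G.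
Proof.
move=> FG; apply: eq_bigr => k _; apply: eq_bigr => l _.
by apply: eq_bigr => i /FG.
Qed.

Lemma sum_kliB F G : sum_kli (fun k i l => F k i l - G k i l) = sum_kli F - sum_kli G.
Proof.
rewrite /sum_kli -sumrB; apply: eq_bigr => k _; rewrite -sumrB.
by apply: eq_bigr => l _; rewrite -sumrB.
Qed.

Lemma sum_kliMl c F : sum_kli (fun k i l => c * F k i l) = c * sum_kli F.
Proof.
rewrite /sum_kli mulr_sumr; apply: eq_bigr => k _; rewrite mulr_sumr.
by apply: eq_bigr => l _; rewrite mulr_sumr.
Qed.

Lemma sum_kli_ge0 F :
  (forall (k : 'I_K) (i l : 'I_L), (l <= i)%N -> 0 <= F k i l) -> 0 <= sum_kli F.
Proof.
move=> F_ge0; apply: sumr_ge0 => k _; apply: sumr_ge0 => l _.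
by apply: sumr_ge0 => i /F_ge0.
Qed.

Lemma sum_kli_eq0 F : (forall (k : 'I_K) (i l : 'I_L), (l <= i)%N -> 0 <= F k i l) ->
  sum_kli F = 0 -> forall (k : 'I_K) (i l : 'I_L), (l <= i)%N -> F k i l = 0.
Proof.
move=> F_ge0 + k i l li.
have sumi_ge0 k' (l' : 'I_L) : 0 <= \sum_(i < L | (l' <= i)%N) F k' i l'.
  by apply: sumr_ge0 => ? /F_ge0.
have suml_ge0 k' : 0 <= \sum_(l < L) \sum_(i < L | (l <= i)%N) F k' i l.
  by apply: sumr_ge0 => l' _; apply: sumi_ge0.
move/(psumr_eq0P (fun k' _ => suml_ge0 k')) /(_ k isT).
move/(psumr_eq0P (fun l' _ => sumi_ge0 k l')) /(_ l isT).
by move/(psumr_eq0P (fun i' li' => F_ge0 k i' l li')) /(_ i li).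
Qed.

Lemma lagr_sub Etx xith P1 P2 xi cbar V1 V2 b theta Gam eta beta :
  lagr Etx xith P1 xi cbar V1 b theta Gam eta beta
  - lagr Etx xith P2 xi cbar V2 b theta Gam eta beta
  = beta * (trPPH P1 - trPPH P2) +
    sum_kli (fun k i l =>
      eta k i l * b k i l * (mse P1 (V1 k i l) k i l - mse P2 (V2 k i l) k i l)).
Proof.
rewrite /Defs.lagr.
set S1 := \sum_(k < K) \sum_(l < L) \sum_(i < L | (l <= i)%N) _.
set S2 := \sum_(k < K) \sum_(l < L) \sum_(i < L | (l <= i)%N) _.
suff -> : sum_kli (fun k i l =>
    eta k i l * b k i l * (mse P1 (V1 k i l) k i l - mse P2 (V2 k i l) k i l)) = S1 - S2.
  by ring.
rewrite -sumrB; apply: eq_bigr => k _; rewrite -sumrB; apply: eq_bigr => l _.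
by rewrite -sumrB; apply: eq_bigr => i _; rewrite /awmse; ring.
Qed.

Lemma mseD_sub (P D : 'M[C]_(M, K)) v k i l :
  mse (P + D) v k i l - mse (P - D) v k i l =
  4 * (sqn v * ((alpha k l + \sum_(j < L | (l < j)%N) alpha k j)
                  * rdot (hp D k i k) (hp P k i k)
               + \sum_(t < K | t != k) rdot (hp D k i t) (hp P k i t))
       - complex.Re (Complex (alpha k l) 0 * v * hp D k i k)).
Proof.
rewrite /Defs.mse /Defs.TT /Defs.rr hpD hpB /= -!mulr_suml.
have sum_polarization (F G : 'I_K -> C) :
    \sum_(t < K | t != k) sqn (F t + G t) =
    \sum_(t < K | t != k) sqn (F t - G t) + 4 * \sum_(t < K | t != k) rdot (G t) (F t).
  by rewrite mulr_sumr -big_split; apply: eq_bigr => t _; rewrite sqn_polarization.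
rewrite (sum_polarization (hp P k i) (hp D k i)) sqn_polarization.
have Re_polarization (a x y : C) :
    complex.Re (a * (x + y)) = complex.Re (a * (x - y)) + 2 * complex.Re (a * y).
  by case: a x y => ? ? [? ?] [? ?] /=; ring.
by rewrite Re_polarization; ring.
Qed.

Definition rdotv (x y : 'cV[C]_M) : R := \sum_(m < M) rdot (x m 0) (y m 0).

Lemma rdotv_is_zmod_morphism x : zmod_morphism (rdotv x).
Proof.
by move=> y z; rewrite /rdotv -sumrB; apply: eq_bigr => m _; rewrite !mxE raddfB.
Qed.

HB.instance Definition _ x :=
  GRing.isZmodMorphism.Build _ _ (rdotv x) (rdotv_is_zmod_morphism x).

Lemma rdotvZ x (r : R) y : rdotv x (Complex r 0 *: y) = r * rdotv x y.
Proof. by rewrite /rdotv mulr_sumr; apply: eq_bigr => m _; rewrite mxE rdotZr. Qed.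

Lemma rdotv_herm_mul x (h : 'rV[C]_M) y :
  rdotv x (herm h *m (h *m y)) = rdot ((h *m x) 0 0) ((h *m y) 0 0).
Proof.
rewrite /rdotv [(h *m x) 0 0]mxE rdot_suml; apply: eq_bigr => m _.
by rewrite mxE big_ord1 /herm !mxE rdot_conjMr.
Qed.

Lemma rdotv_herm x (h : 'rV[C]_M) c : rdotv x (c *: herm h) = rdot ((h *m x) 0 0) c.
Proof.
rewrite /rdotv [(h *m x) 0 0]mxE rdot_suml; apply: eq_bigr => m _.
by rewrite /herm !mxE mulrC rdot_conjMr.
Qed.

Lemma trPPH_sub (P D : 'M[C]_(M, K)) :
  trPPH (P + D) - trPPH (P - D) = 4 * \sum_(k < K) rdotv (col k D) (col k P).
Proof.
rewrite !trPPH_E -sumrB.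
transitivity (\sum_(m < M) \sum_(k < K) 4 * rdot (D m k) (P m k)).
  apply: eq_bigr => m _; rewrite -sumrB; apply: eq_bigr => k _.
  by rewrite !mxE sqn_polarization addrAC subrr add0r.
rewrite exchange_big mulr_sumr; apply: eq_bigr => k _.
by rewrite /rdotv mulr_sumr; apply: eq_bigr => m _; rewrite !mxE.
Qed.

Lemma trPPH_rdotv (P : 'M[C]_(M, K)) : trPPH P = \sum_(k < K) rdotv (col k P) (col k P).
Proof.
rewrite trPPH_E exchange_big; apply: eq_bigr => k _.
by apply: eq_bigr => m _; rewrite !mxE rdotii.
Qed.

Definition precoder_mx (V : 'I_K -> 'I_L -> 'I_L -> C)
    (b eta : 'I_K -> 'I_L -> 'I_L -> R) (beta : R) (k : 'I_K) : 'M[C]_M :=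
  (Complex beta 0)%:M
  + \sum_(l < L) \sum_(i < L | (l <= i)%N) \sum_(j < L | (l <= j)%N)
      Complex (alpha k j * eta k i l * b k i l * sqn (V k i l)) 0
        *: (herm (hch k i) *m hch k i)
  + \sum_(t < K | t != k) \sum_(l < L) \sum_(i < L | (l <= i)%N)
      Complex (eta t i l * b t i l * sqn (V t i l)) 0
        *: (herm (hch t i) *m hch t i).

Definition precoder_rhs (V : 'I_K -> 'I_L -> 'I_L -> C)
    (b eta : 'I_K -> 'I_L -> 'I_L -> R) (k : 'I_K) : 'cV[C]_M :=
  \sum_(l < L) \sum_(i < L | (l <= i)%N)
    (Complex (eta k i l * b k i l * alpha k l) 0 * conjc (V k i l)) *: herm (hch k i).

Lemma rdotv_precoder_mx V b eta beta k (P D : 'M[C]_(M, K)) :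
  rdotv (col k D) (precoder_mx V b eta beta k *m col k P) =
  beta * rdotv (col k D) (col k P)
  + \sum_(l < L) \sum_(i < L | (l <= i)%N) \sum_(j < L | (l <= j)%N)
       alpha k j * eta k i l * b k i l * sqn (V k i l) * rdot (hp D k i k) (hp P k i k)
  + \sum_(t < K | t != k) \sum_(l < L) \sum_(i < L | (l <= i)%N)
       eta t i l * b t i l * sqn (V t i l) * rdot (hp D t i k) (hp P t i k).
Proof.
rewrite /precoder_mx !mulmxDl !raddfD /= mul_scalar_mx rdotvZ.
congr (_ + _ + _); rewrite !mulmx_suml raddf_sum; apply: eq_bigr => ? _;
  rewrite !mulmx_suml raddf_sum; apply: eq_bigr => ? _;
  rewrite !mulmx_suml raddf_sum; apply: eq_bigr => ? _;
  by rewrite -scalemxAl /= rdotvZ -mulmxA rdotv_herm_mul.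
Qed.

Lemma rdotv_precoder_rhs V b eta k (D : 'M[C]_(M, K)) :
  rdotv (col k D) (precoder_rhs V b eta k) =
  \sum_(l < L) \sum_(i < L | (l <= i)%N)
     eta k i l * b k i l * complex.Re (Complex (alpha k l) 0 * V k i l * hp D k i k).
Proof.
rewrite /precoder_rhs raddf_sum; apply: eq_bigr => l _.
rewrite raddf_sum; apply: eq_bigr => i _.
rewrite /= rdotv_herm rdotZr rdot_conjr /Defs.hp.
by case: (V k i l) ((hch k i *m col k D) 0 0) => ? ? [? ?] /=; ring.
Qed.

Lemma sum_rdotv_precoder_mx V b eta beta (P D : 'M[C]_(M, K)) :
  \sum_(k < K) rdotv (col k D) (precoder_mx V b eta beta k *m col k P) =
  beta * \sum_(k < K) rdotv (col k D) (col k P)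
  + sum_kli (fun k i l => eta k i l * b k i l * sqn (V k i l) *
      ((alpha k l + \sum_(j < L | (l < j)%N) alpha k j) * rdot (hp D k i k) (hp P k i k)
       + \sum_(t < K | t != k) rdot (hp D k i t) (hp P k i t))).
Proof.
under eq_bigr do rewrite rdotv_precoder_mx.
rewrite !big_split /= -mulr_sumr -addrA; congr (_ + _).
rewrite (exchange_big_neq (fun k t => \sum_(l < L) \sum_(i < L | (l <= i)%N)
  eta t i l * b t i l * sqn (V t i l) * rdot (hp D t i k) (hp P t i k))) /=.
rewrite -big_split; apply: eq_bigr => k _ /=.
rewrite [X in _ + X]exchange_big -big_split; apply: eq_bigr => l _ /=.
rewrite [X in _ + X]exchange_big -big_split; apply: eq_bigr => i _ /=.
rewrite big_ord_geq_split -mulr_sumr.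
have -> : \sum_(j < L | (l < j)%N)
    alpha k j * eta k i l * b k i l * sqn (V k i l) * rdot (hp D k i k) (hp P k i k)
  = (\sum_(j < L | (l < j)%N) alpha k j) *
    (eta k i l * b k i l * sqn (V k i l) * rdot (hp D k i k) (hp P k i k)).
  by rewrite mulr_suml; apply: eq_bigr => j _; ring.
ring.
Qed.

Lemma lagr_sub_P Etx xith xi cbar theta Gam V b eta beta (P D : 'M[C]_(M, K)) :
  lagr Etx xith (P + D) xi cbar V b theta Gam eta beta
  - lagr Etx xith (P - D) xi cbar V b theta Gam eta beta
  = 4 * \sum_(k < K) rdotv (col k D)
          (precoder_mx V b eta beta k *m col k P - precoder_rhs V b eta k).
Proof.
under [in RHS]eq_bigr do rewrite raddfB /=.
rewrite lagr_sub trPPH_sub sumrB sum_rdotv_precoder_mx.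
have -> : \sum_(k < K) rdotv (col k D) (precoder_rhs V b eta k) =
    sum_kli (fun k i l =>
      eta k i l * b k i l * complex.Re (Complex (alpha k l) 0 * V k i l * hp D k i k)).
  by apply: eq_bigr => k _; rewrite rdotv_precoder_rhs.
set S := sum_kli (fun k i l => _ * (_ - _)).
set X := sum_kli (fun k i l => _ * (_ + _)).
set Y := sum_kli (fun k i l => _ * complex.Re _).
suff -> : S = 4 * (X - Y) by ring.
rewrite /S /X /Y -sum_kliB -sum_kliMl; apply: eq_sum_kli => k i l _.
by rewrite mseD_sub; ring.
Qed.

Lemma mse_opt_even P k i l (z d : C) : 0 < TT P k i l ->
  z = Complex (alpha k l) 0 * conjc (hp P k i k) / Complex (TT P k i l) 0 ->
  mse P (z + d) k i l = mse P (z - d) k i l.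
Proof.
move=> + ->; rewrite /Defs.mse.
move: (TT P k i l) => T T_gt0; move: (alpha k l) (hp P k i k) => a [h1 h2].
case: d => d1 d2; rewrite /sqn /= expr0n /= !mul0r !addr0.
by field; rewrite gt_eqF.
Qed.

Lemma Re_opt_receiver P k i l (z : C) : 0 < TT P k i l ->
  z = Complex (alpha k l) 0 * conjc (hp P k i k) / Complex (TT P k i l) 0 ->
  complex.Re (Complex (alpha k l) 0 * z * hp P k i k) = sqn z * TT P k i l.
Proof.
move=> + ->; move: (TT P k i l) => T T_gt0; move: (alpha k l) (hp P k i k) => a [h1 h2].
rewrite /sqn /= expr0n /= !mul0r !addr0.
by field; rewrite gt_eqF.
Qed.

Definition dirV (k : 'I_K) (i l : 'I_L) (d : C) : 'I_K -> 'I_L -> 'I_L -> C :=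
  fun k' i' l' => if [&& k' == k, i' == i & l' == l] then d else 0.

Lemma updV_addE (V : 'I_K -> 'I_L -> 'I_L -> C) k i l (c d : C) :
  updV V k i l (V k i l + c * d) = fun k' i' l' => V k' i' l' + c * dirV k i l d k' i' l'.
Proof.
apply/funext => k'; apply/funext => i'; apply/funext => l'.
rewrite /updV /dirV; case: ifP => [/and3P [/eqP -> /eqP -> /eqP ->] | _] //.
by rewrite mulr0 addr0.
Qed.

Definition dirM (m : 'I_M) (k : 'I_K) (d : C) : 'M[C]_(M, K) :=
  \matrix_(x, y) if (x == m) && (y == k) then d else 0.

Lemma updM_addE (P : 'M[C]_(M, K)) m k (c : C) : updM P m k (P m k + c) = P + dirM m k c.
Proof.
apply/matrixP => x y; rewrite !mxE.
by case: ifP => [/andP [/eqP -> /eqP ->] | _] //; rewrite addr0.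
Qed.

Lemma updM_subE (P : 'M[C]_(M, K)) m k (c : C) : updM P m k (P m k - c) = P - dirM m k c.
Proof.
apply/matrixP => x y; rewrite !mxE.
by case: ifP => [/andP [/eqP -> /eqP ->] | _] //; rewrite subr0.
Qed.

Lemma dirMZ m k (c d : C) : dirM m k (c * d) = c *: dirM m k d.
Proof. by apply/matrixP => x y; rewrite !mxE; case: ifP; rewrite ?mulr0. Qed.

Section KKT.
Variables (Etx : R) (xith xi : 'I_K -> 'I_L -> R) (cbar : R).
Variables (theta : 'I_K -> R) (Gam : 'I_K -> 'I_L -> R).
Variables (P : 'M[C]_(M, K)) (V : 'I_K -> 'I_L -> 'I_L -> C).
Variables (b eta : 'I_K -> 'I_L -> 'I_L -> R) (beta : R).

Hypothesis alpha_gt0 : forall k l, 0 < alpha k l.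
Hypothesis b_gt0 : forall (k : 'I_K) (i l : 'I_L), (l <= i)%N -> 0 < b k i l.
Hypothesis eta_ge0 : forall (k : 'I_K) (i l : 'I_L), (l <= i)%N -> 0 <= eta k i l.
Hypothesis V_opt : forall (k : 'I_K) (i l : 'I_L), (l <= i)%N ->
  V k i l = Complex (alpha k l) 0 * conjc (hp P k i k) / Complex (TT P k i l) 0.
Hypothesis A_unit : forall k, precoder_mx V b eta beta k \in unitmx.
Hypothesis P_opt : forall k,
  col k P = invmx (precoder_mx V b eta beta k) *m precoder_rhs V b eta k.

Local Notation h P V := (lagr Etx xith P xi cbar V b theta Gam eta beta).
Local Notation power := (sum_kli (fun k i l => eta k i l * b k i l * sqn (V k i l))).

Lemma lagr_stationary_V (k : 'I_K) (i l : 'I_L) :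
  (l <= i)%N -> wstationary (fun v => h P (updV V k i l v)) (V k i l).
Proof.
move=> li; apply: wstationary_even => d.
  under eq_fun => t do rewrite updV_addE.
  apply: quadratic_lagr => [|k' i' l']; first exact: quadratic_cst.
  exact: quadratic_mse_V.
apply/eqP; rewrite -subr_eq0 lagr_sub subrr mulr0 add0r; apply/eqP.
apply: big1 => k' _; apply: big1 => l' _; apply: big1 => i' _.
rewrite /updV; case: ifP => [/and3P [/eqP -> /eqP -> /eqP ->] | _]; last first.
  by rewrite subrr mulr0.
by rewrite (mse_opt_even _ (TT_gt0 alpha_gt0 P k i l) (V_opt k li)) subrr mulr0.
Qed.

Lemma precoder_eq k : precoder_mx V b eta beta k *m col k P = precoder_rhs V b eta k.
Proof. by rewrite P_opt mulmxA mulmxV // mul1mx. Qed.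

Lemma lagr_even_P D : h (P + D) V = h (P - D) V.
Proof.
apply/eqP; rewrite -subr_eq0 lagr_sub_P big1 ?mulr0 // => k _.
by rewrite precoder_eq subrr raddf0.
Qed.

Lemma lagr_stationary_P m k : wstationary (fun z => h (updM P m k z) V) (P m k).
Proof.
apply: wstationary_even => d; last by rewrite updM_addE updM_subE lagr_even_P.
under eq_fun => t do rewrite updM_addE dirMZ.
apply: quadratic_lagr => [|k' i' l']; first exact: quadratic_trPPH.
exact: quadratic_mse_P.
Qed.

Lemma lagr_sub_P_self : h (P + P) V - h (P - P) V = 4 * (beta * trPPH P - power).
Proof.
rewrite lagr_sub trPPH_sub -trPPH_rdotv.
set S := sum_kli (fun k i l => _ * (_ - _)).
suff -> : S = -4 * power by ring.
rewrite /S -sum_kliMl; apply: eq_sum_kli => k i l li.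
rewrite mseD_sub (Re_opt_receiver (TT_gt0 alpha_gt0 P k i l) (V_opt k li)) rdotii.
rewrite (eq_bigr _ (fun t _ => rdotii (hp P k i t))).
by rewrite /Defs.TT /Defs.rr -mulr_suml; ring.
Qed.

Lemma complementary_slackness : beta * Etx = power -> beta * (trPPH P - Etx) = 0.
Proof.
move=> beta_Etx.
have : 4 * (beta * (trPPH P - Etx)) = 0.
  by rewrite mulrBr beta_Etx -lagr_sub_P_self lagr_even_P subrr.
by move/eqP; rewrite mulf_eq0 pnatr_eq0 /= => /eqP.
Qed.

Lemma power_term_ge0 (k : 'I_K) (i l : 'I_L) :
  (l <= i)%N -> 0 <= eta k i l * b k i l * sqn (V k i l).
Proof. by move=> li; rewrite !mulr_ge0 ?sqn_ge0 ?eta_ge0 ?ltW ?b_gt0. Qed.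

Lemma multiplier_ge0 : 0 < Etx -> beta = Etx^-1 * power -> 0 <= beta.
Proof.
move=> Etx_gt0 ->; rewrite mulr_ge0 ?invr_ge0 ?(ltW Etx_gt0) //.
exact: sum_kli_ge0 power_term_ge0.
Qed.

Lemma power_eq0_P : power = 0 -> P = 0.
Proof.
move=> /(sum_kli_eq0 power_term_ge0) term0.
have rhs0 k : precoder_rhs V b eta k = 0.
  apply: big1 => l _; apply: big1 => i li.
  move/eqP: (term0 k i l li); rewrite !mulf_eq0 (gt_eqF (b_gt0 k li)) orbF.
  case/orP => [/eqP -> | /eqP /sqn_eq0 ->]; first by rewrite !mul0r scale0r.
  by rewrite conjc0 mulr0 scale0r.
apply/matrixP => m k; move/colP: (P_opt k) => /(_ m).
by rewrite rhs0 mulmx0 !mxE.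
Qed.

Lemma power_feasible :
  0 < Etx -> beta * Etx = power -> beta * (trPPH P - Etx) = 0 -> trPPH P <= Etx.
Proof.
move=> Etx_gt0 beta_Etx slack; have [beta0 | beta_neq0] := eqVneq beta 0.
  have -> : P = 0 by apply: power_eq0_P; rewrite -beta_Etx beta0 mul0r.
  by rewrite /trPPH mul0mx mxtrace0 raddf0 ltW.
by move/eqP: slack; rewrite mulf_eq0 (negbTE beta_neq0) subr_eq0 => /eqP ->.
Qed.

End KKT.

End Lagrangian.

Theorem theorem1 (R : realType) (M K L : nat)
  (hch : 'I_K -> 'I_L -> 'rV[R[i]]_M) (alpha : 'I_K -> 'I_L -> R)
  (Etx : R) (xith : 'I_K -> 'I_L -> R)
  (P : 'M[R[i]]_(M, K)) (xi : 'I_K -> 'I_L -> R) (cbar : R)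
  (V : 'I_K -> 'I_L -> 'I_L -> R[i]) (b : 'I_K -> 'I_L -> 'I_L -> R)
  (theta : 'I_K -> R) (Gam : 'I_K -> 'I_L -> R)
  (eta : 'I_K -> 'I_L -> 'I_L -> R) (beta : R) :
  (* standing assumptions *)
  (forall (k : 'I_K) (l : 'I_L), 0 < alpha k l) ->
  (forall k : 'I_K, \sum_(l < L) alpha k l = 1) ->
  0 < Etx ->
  (forall (k : 'I_K) (i l : 'I_L), (l <= i)%N -> 0 < b k i l) ->
  (forall k : 'I_K, 0 <= theta k) ->
  (forall (k : 'I_K) (l : 'I_L), 0 <= Gam k l) ->
  (forall (k : 'I_K) (i l : 'I_L), (l <= i)%N -> 0 <= eta k i l) ->
  (* receivers  V_{k,i->l} = alpha_{k,l} p_k^H h_{k,i}^H T_{k,i->l}^{-1} *)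
  (forall (k : 'I_K) (i l : 'I_L), (l <= i)%N ->
     V k i l = Complex (alpha k l) 0 * conjc (hp hch P k i k)
               / Complex (TT hch alpha P k i l) 0) ->
  (* multiplier beta *)
  beta = Etx^-1 * \sum_(k < K) \sum_(l < L) \sum_(i < L | (l <= i)%N)
                    eta k i l * b k i l * sqn (V k i l) ->
  (* precoders  p_k = [A_k]^{-1} [rhs_k]  (the bracketed matrix is invertible) *)
  (forall k : 'I_K,
     let A : 'M[R[i]]_M :=
       (Complex beta 0)%:M
       + \sum_(l < L) \sum_(i < L | (l <= i)%N) \sum_(j < L | (l <= j)%N)
           Complex (alpha k j * eta k i l * b k i l * sqn (V k i l)) 0
             *: (herm (hch k i) *m hch k i)
       + \sum_(t < K | t != k) \sum_(l < L) \sum_(i < L | (l <= i)%N)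
           Complex (eta t i l * b t i l * sqn (V t i l)) 0
             *: (herm (hch t i) *m hch t i) in
     let rhs : 'cV[R[i]]_M :=
       \sum_(l < L) \sum_(i < L | (l <= i)%N)
         (Complex (eta k i l * b k i l * alpha k l) 0 * conjc (V k i l))
           *: herm (hch k i) in
     A \in unitmx /\ col k P = invmx A *m rhs) ->
  (* KKT conditions involving V, P and beta *)
  (forall (k : 'I_K) (i l : 'I_L), (l <= i)%N ->
     wstationary (fun v => lagr hch alpha Etx xith P xi cbar
                             (updV V k i l v) b theta Gam eta beta) (V k i l)) /\
  (forall (m : 'I_M) (k : 'I_K),
     wstationary (fun z => lagr hch alpha Etx xith (updM P m k z) xi cbar
                             V b theta Gam eta beta) (P m k)) /\
  trPPH P <= Etx /\
  0 <= beta /\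
  beta * (trPPH P - Etx) = 0.
Proof.
move=> alpha_gt0 _ Etx_gt0 b_gt0 _ _ eta_ge0 V_opt beta_def P_def.
have A_unit k := (P_def k).1.
have P_opt k := (P_def k).2.
have beta_Etx : beta * Etx =
    sum_kli (fun k i l => eta k i l * b k i l * sqn (V k i l)).
  by rewrite beta_def mulrAC mulVf ?mul1r // gt_eqF.
have slack := complementary_slackness xith xi cbar theta Gam
  alpha_gt0 V_opt A_unit P_opt beta_Etx.
split; first exact: lagr_stationary_V.
split; first exact: lagr_stationary_P.
split; first exact: power_feasible b_gt0 eta_ge0 P_opt Etx_gt0 beta_Etx slack.
split=> //; exact: multiplier_ge0 b_gt0 eta_ge0 Etx_gt0 beta_def.
Qed.
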